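(* Let $\ell,n\in\mathbb{Z}_{\ge0}$ with $\ell\ge n$ and let $1\le k<n$. There is a family of skew polynomials $\{g_{\underline e,k+1}\in\mathrm{SkPol}_{k+1}\mid \underline e=(e_k,\dots,e_1)\in\{0,1\}^k\}$ such that (1) each $g_{\underline e,k+1}$ is a polynomial in $t_{k+1}$ of degree $\ell-k+\ell(\underline e)$ whose leading coefficient is invertible and whose other coefficients lie in $\mathrm{SkPol}_k$; and (2) $\sum_{\underline e}g_{\underline e,k+1}\,\tau_{\underline{S_k}^{\underline e}}=0$ in $\mathrm{ONH}_n^\ell$ (where $g_{\underline e,k+1}$ acts by substituting $x_j$ for $t_j$).
   Context: $\mathbf{k}$ is a field of characteristic $\neq2$. $\mathrm{ONH}_n$ is the unital $\mathbf{k}$-algebra with generators $\tau_1,\dots,\tau_{n-1},x_1,\dots,x_n$ and relations $\tau_i^2=0$; $\tau_i\tau_{i+1}\tau_i=\tau_{i+1}\tau_i\tau_{i+1}$; $x_i\tau_i+\tau_ix_{i+1}=1$; $\tau_ix_i+x_{i+1}\tau_i=1$; $x_ix_j+x_jx_i=0$ ($i\ne j$); $\tau_i\tau_j+\tau_j\tau_i=0$ ($|i-j|>1$); $x_i\tau_j+\tau_jx_i=0$ ($i\ne j,j+1$). $\mathrm{ONH}_n^\ell$ is its quotient by the two-sided ideal generated by $x_1^\ell$. $\mathrm{SkPol}_a=\mathbb{Z}\langle t_1,\dots,t_a\rangle/(t_it_j+t_jt_i,\ i\ne j)$, with $\mathrm{SkPol}_a\subset\mathrm{SkPol}_{a+1}$;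 it acts on $\mathrm{ONH}_n^\ell$ by multiplication after substituting $x_j$ for $t_j$. For $\underline e=(e_k,\dots,e_1)\in\{0,1\}^k$, $\ell(\underline e)=\sum_ie_i$ and $\tau_{\underline{S_k}^{\underline e}}=\tau_{s_k^{e_k}}\tau_{s_{k-1}^{e_{k-1}}}\cdots\tau_{s_1^{e_1}}$, where $\tau_{s_j^1}=\tau_j$ and $\tau_{s_j^0}=1$. *)

From HB Require Import structures.
From mathcomp Require Import all_boot all_order all_algebra.
From mathcomp Require Import mpoly.
Set Implicit Arguments. Unset Strict Implicit. Unset Printing Implicit Defensive.
Import Order.TTheory GRing.Theory.
Local Open Scope ring_scope.

(* ---------- SkPol_a ----------
   SkPol_a = Z<t_1..t_a>/(t_i t_j + t_j t_i, i<>j) is a free Z-module with basis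
   the ordered monomials t^m := t_1^(m 0) t_2^(m 1) ... t_a^(m (a-1)).
   We represent an element by its coordinates in this basis, i.e. by an element
   of {mpoly int[a]} where the monomial 'X_[m] stands for the ORDERED product t^m. *)
Definition SkPol (a : nat) := {mpoly int[a]}.

Definition sk_sign (a : nat) (m m' : 'X_{1..a}) : int :=
  (-1) ^+ (\sum_(i < a) \sum_(j < a | (j < i)%N) (m i * m' j))%N.

Definition skmul (a : nat) (p q : SkPol a) : SkPol a :=
  \sum_(m <- msupp p) \sum_(m' <- msupp q)
     (sk_sign m m' * p@_m * q@_m') *: 'X_[(m + m')%MM].

Definition skunit (a : nat) (p : SkPol a) : Prop :=
  exists q : SkPol a, skmul p q = 1 /\ skmul q p = 1.

(* Action of SkPol_a on a ring A: substitute x_j for t_j (1-based: t_j = x (j)). *)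
Definition sk_eval (A : pzRingType) (a : nat) (x : nat -> A) (p : SkPol a) : A :=
  \sum_(m <- msupp p) (p@_m)%:~R * \prod_(i < a) x i.+1 ^+ m i.

(* An element of SkPol_(k+1) written as a polynomial in t_(k+1) with coefficients
   in SkPol_k, placed on the left:  g = sum_i c_i t_(k+1)^i, with c = coefficient list. *)
Definition skt_eval (A : pzRingType) (k : nat) (x : nat -> A) (c : seq (SkPol k)) : A :=
  \sum_(i < size c) sk_eval x (nth 0 c i) * x k.+1 ^+ i.

(* ---------- ONH_n^ell via its presentation ----------
   Generators tau_1..tau_(n-1), x_1..x_n (1-based indices; tau i, x i). *)
Definition ONH_rel (A : pzRingType) (n : nat) (tau x : nat -> A) : Prop :=
  (forall i, (1 <= i < n)%N -> tau i * tau i = 0) /\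
      (forall i, (1 <= i)%N -> (i.+1 < n)%N ->
          tau i * tau i.+1 * tau i = tau i.+1 * tau i * tau i.+1) /\
      (forall i, (1 <= i < n)%N -> x i * tau i + tau i * x i.+1 = 1) /\
      (forall i, (1 <= i < n)%N -> tau i * x i + x i.+1 * tau i = 1) /\
      (forall i j, (1 <= i <= n)%N -> (1 <= j <= n)%N -> i != j ->
          x i * x j + x j * x i = 0) /\
      (forall i j, (1 <= i < n)%N -> (1 <= j < n)%N -> (i.+1 < j \/ j.+1 < i)%N ->
          tau i * tau j + tau j * tau i = 0) /\
      (forall i j, (1 <= i <= n)%N -> (1 <= j < n)%N -> i != j -> i != j.+1 ->
          x i * tau j + tau j * x i = 0).

Definition ONH_cyc_rel (A : pzRingType) (n ell : nat) (tau x : nat -> A) : Prop :=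
  ONH_rel n tau x /\ x 1%N ^+ ell = 0.

(* tau_{S_k^e} = tau_{s_k^{e_k}} ... tau_{s_1^{e_1}}, with e i meaning e_(i+1). *)
Definition tauS (A : pzRingType) (k : nat) (tau : nat -> A) (e : {ffun 'I_k -> bool}) : A :=
  \big[*%R/1]_(i <- rev (enum 'I_k)) (if e i then tau i.+1 else 1).

Definition len_e (k : nat) (e : {ffun 'I_k -> bool}) : nat := #|[pred i | e i]|.

(* Start from [x_1^ell = 0] and multiply on the left by [tau_1], ..., [tau_k] in turn.
   Given a relation [sum_e f_e tau_(S_j^e) = 0] with [f_e] a polynomial in
   [x_1, ..., x_(j+1)], the element [tau_(j+1)] anticommutes with [x_1, ..., x_j], and the
   relation [tau x_(j+1) + x_(j+2) tau = 1] gives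
   [tau_(j+1) x_(j+1)^m = sum_(i < m) +-x_(j+1)^(m-1-i) x_(j+2)^i +- x_(j+2)^m tau_(j+1)].
   Hence [tau_(j+1) f_e = r_e + p_e tau_(j+1)], a relation for [S_(j+1)] with coefficient
   [p_e] at [(1, e)] and [r_e] at [(0, e)]. The leading term [+-x_(j+1)^D] of [f_e] becomes
   [+-x_(j+2)^D] in [p_e] and [+-x_(j+2)^(D-1)] in [r_e], all other terms having smaller
   degree in [x_(j+2)]; this propagates the degree [ell - j + l(e)] and the leading
   coefficient [+-1]. *)

From HB Require Import structures.
From mathcomp Require Import all_boot all_order all_algebra.
From mathcomp Require Import mpoly.
From mathcomp Require Import zify.
Import GRing.Theory.
Local Open Scope ring_scope.
Set Implicit Arguments. Unset Strict Implicit. Unset Printing Implicit Defensive.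

Section Anticommutation.
Variable A : pzRingType.
Implicit Types a b t y z : A.

Lemma mulr_signCA a b p : a * ((-1) ^+ p * b) = (-1) ^+ p * (a * b).
Proof. by rewrite mulrA (commr_sign a p) -mulrA. Qed.

Lemma anticomm_exprr a b p :
  b * a = - (a * b) -> b * a ^+ p = (-1) ^+ p * (a ^+ p * b).
Proof.
move=> ba; elim: p => [|p IHp]; first by rewrite !expr0 !mul1r mulr1.
rewrite exprSr mulrA IHp -!mulrA ba.
by rewrite !mulrN -mulNr -mulN1r -exprS !mulrA.
Qed.

Lemma anticomm_exprl a b p :
  b * a = - (a * b) -> b ^+ p * a = (-1) ^+ p * (a * b ^+ p).
Proof.
move=> ba; elim: p => [|p IHp]; first by rewrite !expr0 !mul1r mulr1.
rewrite exprS -mulrA IHp mulr_signCA mulrA ba exprS mulN1r !mulNr.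
by rewrite mulrN -!mulrA.
Qed.

Lemma anticomm_prod b (a : nat -> A) (s : nat -> nat) j :
    (forall i, (i < j)%N -> b * a i = - (a i * b)) ->
  b * \prod_(i < j) a i ^+ s i =
  (-1) ^+ (\sum_(i < j) s i)%N * (\prod_(i < j) a i ^+ s i * b).
Proof.
elim: j => [|j IHj] ba; first by rewrite !big_ord0 expr0 mul1r mulr1 mul1r.
rewrite !big_ord_recr /= mulrA IHj => [|i /ltnW/ba //].
by rewrite -!mulrA anticomm_exprr ?ba // exprD -!mulrA mulr_signCA.
Qed.

Lemma nilHecke_exprr t y z m :
    t * y = 1 - z * t -> z * y = - (y * z) ->
  t * y ^+ m =
  \sum_(i < m) (-1) ^+ (i * (m - i)) * (y ^+ (m - i).-1 * z ^+ i)
  + (-1) ^+ m * (z ^+ m * t).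
Proof.
move=> ty zy; elim: m => [|m IHm]; first by rewrite big_ord0 add0r !expr0 !mul1r mulr1.
rewrite exprSr mulrA IHm mulrDl big_ord_recr /= subSnn muln1 expr0 mul1r -addrA.
congr (_ + _).
  rewrite mulr_suml; apply: eq_bigr => i _.
  have lt_im := ltn_ord i.
  rewrite -!mulrA (anticomm_exprl i zy) mulr_signCA mulrA -exprSr mulrA -exprD.
  by rewrite subSn 1?ltnW // prednK ?subn_gt0 // mulnS addnC.
by rewrite -!mulrA ty mulrBr mulr1 mulrBr exprS mulN1r mulNr exprSr !mulrA.
Qed.

End Anticommutation.

Section ONHRelations.
Variables (A : pzRingType) (n : nat) (tau x : nat -> A).
Hypothesis onh : ONH_rel n tau x.

Lemma tau_x_anticomm j l :
  (j.+1 < n)%N -> (1 <= l <= j)%N -> tau j.+1 * x l = - (x l * tau j.+1).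
Proof.
move=> lt_j1n /andP[l_gt0 le_lj]; have [_ [_ [_ [_ [_ [_ tau_x]]]]]] := onh.
apply/eqP; rewrite -addr_eq0 addrC tau_x //.
- by rewrite l_gt0 (leq_trans le_lj) // ltnW // ltnW.
- by rewrite ltn_eqF.
- by rewrite ltn_eqF // ltnW.
Qed.

Lemma x_succ_anticomm j : (j.+2 <= n)%N -> x j.+2 * x j.+1 = - (x j.+1 * x j.+2).
Proof.
move=> le_j2n; have [_ [_ [_ [_ [x_x _]]]]] := onh.
apply/eqP; rewrite -addr_eq0 x_x ?gtn_eqF //; exact: ltnW.
Qed.

Lemma tau_x_nilHecke j : (j.+2 <= n)%N -> tau j.+1 * x j.+1 = 1 - x j.+2 * tau j.+1.
Proof. by move=> le_j2n; have [_ [_ [_ [tau_x _]]]] := onh; rewrite -(tau_x j.+1) ?addrK. Qed.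

End ONHRelations.

(* A signed ordered monomial [(c, s)] stands for [c x_1^(s 0) ... x_L^(s (L-1))];
   note the shift: [s i] is the exponent of [x_(i+1)]. *)
Definition smonom := (int * (nat -> nat))%type.

Definition smonom_eval (A : pzRingType) (x : nat -> A) (L : nat) (t : smonom) : A :=
  t.1%:~R * \prod_(i < L) x i.+1 ^+ t.2 i.

Definition set_exps2 (s : nat -> nat) (j a b : nat) : nat -> nat :=
  fun l => if l == j then a else if l == j.+1 then b else s l.

Definition tau_pass (j : nat) (t : smonom) : smonom :=
  (t.1 * (-1) ^+ (\sum_(i < j) t.2 i + t.2 j)%N, set_exps2 t.2 j 0 (t.2 j)).

(* Listed by decreasing exponent of [x_(j+2)], so that the leading term comes first. *)
Definition tau_rest (j : nat) (t : smonom) : seq smonom :=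
  [seq (t.1 * (-1) ^+ (\sum_(l < j) t.2 l + i * (t.2 j - i))%N,
        set_exps2 t.2 j (t.2 j - i).-1 i) | i <- rev (iota 0 (t.2 j))].

Lemma set_exps2_at j s a b : set_exps2 s j a b j = a.
Proof. by rewrite /set_exps2 eqxx. Qed.

Lemma set_exps2_succ j s a b : set_exps2 s j a b j.+1 = b.
Proof. by rewrite /set_exps2 gtn_eqF // eqxx. Qed.

Lemma smonom_evalS (A : pzRingType) (x : nat -> A) j c s :
  smonom_eval x j.+1 (c, s) = c%:~R * (\prod_(i < j) x i.+1 ^+ s i * x j.+1 ^+ s j).
Proof. by rewrite /smonom_eval big_ord_recr. Qed.

Lemma smonom_eval_set_exps2 (A : pzRingType) (x : nat -> A) j c s a b :
  smonom_eval x j.+2 (c, set_exps2 s j a b) =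
  c%:~R * (\prod_(i < j) x i.+1 ^+ s i * x j.+1 ^+ a * x j.+2 ^+ b).
Proof.
rewrite /smonom_eval !big_ord_recr /= set_exps2_at set_exps2_succ.
congr (_ * (_ * _ * _)); apply: eq_bigr => i _; have lt_ij := ltn_ord i.
by rewrite /set_exps2 !ltn_eqF // ltnW.
Qed.

Lemma tau_smonom (A : pzRingType) (n : nat) (tau x : nat -> A) j t :
    ONH_rel n tau x -> (j.+2 <= n)%N ->
  tau j.+1 * smonom_eval x j.+1 t =
  \sum_(u <- tau_rest j t) smonom_eval x j.+2 u
  + smonom_eval x j.+2 (tau_pass j t) * tau j.+1.
Proof.
case: t => c s onh le_j2n.
have tau_x i : (i < j)%N -> tau j.+1 * x i.+1 = - (x i.+1 * tau j.+1).
  by move=> lt_ij; apply: (tau_x_anticomm onh).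
rewrite smonom_evalS mulrA mulrzr -mulrzl -mulrA (mulrA (tau j.+1)).
rewrite (anticomm_prod (a := fun i => x i.+1) s tau_x) -mulrA -(mulrA (\prod_(i < j) _)).
rewrite (nilHecke_exprr _ (tau_x_nilHecke onh le_j2n) (x_succ_anticomm onh le_j2n)).
rewrite /tau_rest /tau_pass big_map big_rev /=.
rewrite -(subn0 (s j)) -/(index_iota 0 _) big_mkord subn0.
rewrite smonom_eval_set_exps2 expr0 mulr1 intrM intr_sign.
rewrite !mulrDr !mulr_sumr; congr (_ + _).
  apply: eq_bigr => i _.
  by rewrite mulr_signCA smonom_eval_set_exps2 intrM intr_sign exprD !mulrA.
by rewrite mulr_signCA exprD !mulrA.
Qed.

Definition ffun_belast (T : Type) (j : nat) (e : {ffun 'I_j.+1 -> T}) : {ffun 'I_j -> T} :=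
  [ffun i => e (widen_ord (leqnSn j) i)].

Definition ffun_rcons (T : Type) (j : nat) (e : {ffun 'I_j -> T}) (b : T) : {ffun 'I_j.+1 -> T} :=
  [ffun i => if unlift ord_max i is Some i' then e i' else b].

Lemma widen_ord_lift_max j (i : 'I_j) : widen_ord (leqnSn j) i = lift ord_max i.
Proof. by apply: val_inj; rewrite /= /bump leqNgt ltn_ord. Qed.

Lemma ffun_belast_rcons (T : Type) j (e : {ffun 'I_j -> T}) b :
  ffun_belast (ffun_rcons e b) = e.
Proof. by apply/ffunP => i; rewrite !ffunE widen_ord_lift_max liftK. Qed.

Lemma ffun_rcons_max (T : Type) j (e : {ffun 'I_j -> T}) b : ffun_rcons e b ord_max = b.
Proof. by rewrite ffunE unlift_none. Qed.

Lemma ffun_rcons_belast (T : Type) j (e : {ffun 'I_j.+1 -> T}) :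
  ffun_rcons (ffun_belast e) (e ord_max) = e.
Proof.
apply/ffunP => i; rewrite ffunE.
by case: unliftP => [i' ->|-> //]; rewrite ffunE widen_ord_lift_max.
Qed.

Lemma big_ffun_rcons (R : nmodType) j (F : {ffun 'I_j.+1 -> bool} -> R) :
  \sum_(e : {ffun 'I_j.+1 -> bool}) F e =
  \sum_(e : {ffun 'I_j -> bool}) (F (ffun_rcons e true) + F (ffun_rcons e false)).
Proof.
rewrite (reindex (fun p : bool * {ffun 'I_j -> bool} => ffun_rcons p.2 p.1)) /=.
  by rewrite -(pair_bigA _ (fun b e => F (ffun_rcons e b))) big_bool big_split.
apply: onW_bij; exists (fun e : {ffun _ -> _} => (e ord_max, ffun_belast e)).
  by case=> b e; rewrite ffun_belast_rcons ffun_rcons_max.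
by move=> e; rewrite ffun_rcons_belast.
Qed.

Lemma tauS_belast (A : pzRingType) (tau : nat -> A) j (e : {ffun 'I_j.+1 -> bool}) :
  tauS tau e = (if e ord_max then tau j.+1 else 1) * tauS tau (ffun_belast e).
Proof.
rewrite /tauS enum_ordSr rev_rcons big_cons -map_rev big_map; congr (_ * _).
by apply: eq_bigr => i _; rewrite ffunE.
Qed.

Lemma len_e_belast j (e : {ffun 'I_j.+1 -> bool}) :
  len_e e = (len_e (ffun_belast e) + e ord_max)%N.
Proof.
rewrite /len_e -!sum1_card !big_mkcond big_ord_recr /=; congr (_ + _)%N.
by rewrite [RHS]big_mkcond; apply: eq_bigr => i _; rewrite !inE ffunE.
Qed.

Lemma len_e_ord0 (e : {ffun 'I_0 -> bool}) : len_e e = 0%N.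
Proof. by apply: eq_card0 => -[]. Qed.

Definition lead_unit_power (j D : nat) (L : seq smonom) : Prop :=
  exists c s rest, [/\ L = (c, s) :: rest, c \is a GRing.unit, s j = D,
    (forall l, l != j -> s l = 0%N) & all (fun t : smonom => (t.2 j < D)%N) rest].

Lemma unit_mulr_sign (c : int) p : c \is a GRing.unit -> c * (-1) ^+ p \is a GRing.unit.
Proof. by move=> c_unit; rewrite unitrMl ?unitrX ?unitrN1. Qed.

Lemma lead_unit_power_pass j D L :
  lead_unit_power j D L -> lead_unit_power j.+1 D (map (tau_pass j) L).
Proof.
case=> c [s [rest [-> c_unit s_j s_0 rest_lt]]].
rewrite /=; do 3 eexists; split; first by [].
- exact: unit_mulr_sign.
- by rewrite set_exps2_succ.
- by move=> l neq_lj1; rewrite /set_exps2 (negbTE neq_lj1); case: eqP => // /eqP/s_0.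
- by rewrite all_map; apply: sub_all rest_lt => t; rewrite /= set_exps2_succ.
Qed.

Lemma tau_rest_lt j D t :
  (t.2 j < D)%N -> all (fun u : smonom => (u.2 j.+1 < D.-1)%N) (tau_rest j t).
Proof.
move=> lt_tD; rewrite all_map all_rev; apply/allP => i.
rewrite mem_iota add0n /= set_exps2_succ => lt_i.
by rewrite -ltnS prednK ?(leq_trans lt_i) // (leq_ltn_trans _ lt_tD).
Qed.

Lemma lead_unit_power_rest j D L : (0 < D)%N ->
  lead_unit_power j D L -> lead_unit_power j.+1 D.-1 (flatten (map (tau_rest j) L)).
Proof.
move=> D_gt0 [c [s [rest [-> c_unit s_j s_0 rest_lt]]]].
have iota_D : rev (iota 0 (s j)) = D.-1 :: rev (iota 0 D.-1).
  by rewrite s_j -{1}(prednK D_gt0) -addn1 iotaD rev_cat /= add0n.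
rewrite /= {1}/tau_rest iota_D /=; do 3 eexists; split; first by [].
- exact: unit_mulr_sign.
- exact: set_exps2_succ.
- move=> l neq_lj1; rewrite /set_exps2 (negbTE neq_lj1).
  case: eqP => [_|/eqP/s_0 //]; by rewrite s_j -{1}(prednK D_gt0) subSnn.
- rewrite all_cat all_map all_rev; apply/andP; split.
    by apply/allP => i; rewrite mem_iota add0n /= set_exps2_succ.
  elim: rest rest_lt => [//|t rest IHrest] /= /andP[lt_tD rest_lt].
  by rewrite all_cat tau_rest_lt // IHrest.
Qed.

Fixpoint cyc_coefs (ell j : nat) : {ffun 'I_j -> bool} -> seq smonom :=
  match j return {ffun 'I_j -> bool} -> seq smonom with
  | 0 => fun _ => [:: (1, fun l => if l == 0%N then ell else 0%N)]
  | j'.+1 => fun e =>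
      if e ord_max then map (tau_pass j') (cyc_coefs ell (ffun_belast e))
      else flatten (map (tau_rest j') (cyc_coefs ell (ffun_belast e)))
  end.

Lemma lead_unit_power_cyc_coefs ell j (e : {ffun 'I_j -> bool}) : (j <= ell)%N ->
  lead_unit_power j (ell - j + len_e e) (cyc_coefs ell e).
Proof.
elim: j e => [|j IHj] e le_jell /=.
  rewrite len_e_ord0 subn0 addn0.
  by exists 1, (fun l => if l == 0%N then ell else 0%N), [::]; split=> // l /negbTE ->.
have IH := IHj (ffun_belast e) (ltnW le_jell).
rewrite len_e_belast; case: (e ord_max); rewrite ?addn1 ?addn0.
  have -> : (ell - j.+1 + (len_e (ffun_belast e)).+1 = ell - j + len_e (ffun_belast e))%N.
    by lia.
  exact: lead_unit_power_pass.
have -> : (ell - j.+1 + len_e (ffun_belast e) = (ell - j + len_e (ffun_belast e)).-1)%N.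
  by lia.
by apply: lead_unit_power_rest IH; lia.
Qed.

Lemma cyc_coefs_relation (A : pzRingType) n ell j (tau x : nat -> A) :
    (j < n)%N -> ONH_cyc_rel n ell tau x ->
  \sum_(e : {ffun 'I_j -> bool}) (\sum_(t <- cyc_coefs ell e) smonom_eval x j.+1 t) * tauS tau e
  = 0.
Proof.
move=> + [onh x1_ell]; elim: j => [|j IHj] lt_jn.
  by apply: big1 => e _; rewrite big_seq1 /smonom_eval big_ord1 /= x1_ell mulr0 mul0r.
rewrite big_ffun_rcons -[RHS](mulr0 (tau j.+1)) -[X in _ = _ * X](IHj (ltnW lt_jn)) mulr_sumr.
apply: eq_bigr => e _.
rewrite /= !tauS_belast !ffun_rcons_max !ffun_belast_rcons big_map big_flatten /=.
rewrite big_map mul1r mulrA -mulrDl mulrA mulr_suml mulr_sumr -big_split /=.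
by congr (_ * _); apply: eq_bigr => t _; rewrite (tau_smonom _ onh) // addrC.
Qed.

Definition smonom_mpoly (k : nat) (t : smonom) : SkPol k :=
  t.1 *: 'X_[[multinom t.2 i | i < k]].

Definition tcoefs (k D : nat) (L : seq smonom) : seq (SkPol k) :=
  [seq \sum_(t <- L | t.2 k == i) smonom_mpoly k t | i <- iota 0 D.+1].

Lemma size_tcoefs k D L : size (tcoefs k D L) = D.+1.
Proof. by rewrite size_map size_iota. Qed.

Lemma last_tcoefs k D L : lead_unit_power k D L ->
  exists2 c : int, c \is a GRing.unit & last 0 (tcoefs k D L) = c%:MP.
Proof.
case=> c [s [rest [-> c_unit s_k s_0 rest_lt]]]; exists c => //.
rewrite /tcoefs -addn1 iotaD map_cat last_cat /= add0n big_cons /= s_k eqxx.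
have -> : \sum_(t <- rest | t.2 k == D) smonom_mpoly k t = 0.
  elim: rest rest_lt => [|t rest IHrest] /=; first by rewrite big_nil.
  by case/andP=> /ltn_eqF t_neq /IHrest; rewrite big_cons t_neq.
rewrite addr0 /smonom_mpoly (_ : [multinom s i | i < k] = 0%MM) ?mpolyX0 -?alg_mpolyC //.
by apply/mnmP => i; rewrite mnmE mnm0E s_0 // ltn_eqF.
Qed.

Lemma skmulC k (c d : int) : skmul (c%:MP : SkPol k) d%:MP = (c * d)%:MP.
Proof.
rewrite /skmul !msuppC; case: eqP => [->|_]; first by rewrite big_nil mul0r mpolyC0.
case: eqP => [->|_]; first by rewrite big_seq1 big_nil mulr0 mpolyC0.
rewrite !big_seq1 !mcoeffC eqxx !mulr1 addm0 mpolyX0.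
have -> : sk_sign (0%MM : 'X_{1..k}) 0%MM = 1.
  by rewrite /sk_sign big1 ?expr0 // => i _; apply: big1 => j _; rewrite mnm0E.
by rewrite mul1r -alg_mpolyC.
Qed.

Lemma skunitC k (c : int) : c \is a GRing.unit -> skunit (c%:MP : SkPol k).
Proof. by move=> c_unit; exists c^-1%:MP; rewrite !skmulC mulrV ?mulVr. Qed.

Lemma sk_eval_smonoms (A : nzRingType) (x : nat -> A) k (L : seq smonom) (P : pred smonom) :
  sk_eval x (\sum_(t <- L | P t) smonom_mpoly k t) = \sum_(t <- L | P t) smonom_eval x k t.
Proof.
have -> : forall p : SkPol k, sk_eval x p = mmap intr (fun i : 'I_k => x i.+1) p by [].
rewrite raddf_sum /=.
apply: eq_bigr => t _; rewrite /smonom_mpoly mmapZ mmapX /mmap1 /smonom_eval; congr (_ * _).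
by apply: eq_bigr => i _; rewrite mnmE.
Qed.

Lemma skt_eval_tcoefs (A : nzRingType) (x : nat -> A) k D (L : seq smonom) :
    all (fun t : smonom => (t.2 k <= D)%N) L ->
  skt_eval x (tcoefs k D L) = \sum_(t <- L) smonom_eval x k.+1 t.
Proof.
rewrite /skt_eval size_tcoefs.
under eq_bigr => i _ do rewrite (nth_map 0%N) ?size_iota // nth_iota // add0n
  sk_eval_smonoms mulr_suml big_mkcond.
rewrite exchange_big; elim: L => [|t L IHL] /=; first by rewrite !big_nil.
case/andP => le_tD /IHL {}IHL; rewrite !big_cons -IHL; congr (_ + _).
rewrite -big_mkcond /= (big_pred1 (Ordinal (le_tD : (t.2 k < D.+1)%N))) => [|i].
  by rewrite /smonom_eval big_ord_recr mulrA.
by rewrite /= eq_sym.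
Qed.

Lemma lead_unit_power_le j D L :
  lead_unit_power j D L -> all (fun t : smonom => (t.2 j <= D)%N) L.
Proof.
case=> c [s [rest [-> _ s_j _ rest_lt]]] /=; rewrite s_j leqnn.
by apply: sub_all rest_lt => t /ltnW.
Qed.

Theorem lemma4p8 (K : fieldType) (HK : (2 : K) != 0) (ell n k : nat)
    (Hln : (n <= ell)%N) (Hk1 : (1 <= k)%N) (Hkn : (k < n)%N) :
  exists g : {ffun 'I_k -> bool} -> seq (SkPol k),
    (forall e, size (g e) = (ell - k + len_e e).+1 /\ skunit (last 0 (g e))) /\
    (forall (A : algType K) (tau x : nat -> A), ONH_cyc_rel n ell tau x ->
       \sum_(e : {ffun 'I_k -> bool}) skt_eval x (g e) * tauS tau e = 0).
Proof.
have le_kell : (k <= ell)%N by rewrite ltnW // (leq_trans Hkn).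
exists (fun e => tcoefs k (ell - k + len_e e) (cyc_coefs ell e)); split.
  move=> e; split; first exact: size_tcoefs.
  have [c c_unit ->] := last_tcoefs (lead_unit_power_cyc_coefs e le_kell).
  exact: skunitC.
move=> A tau x cyc_rel; rewrite -[RHS](cyc_coefs_relation Hkn cyc_rel).
apply: eq_bigr => e _; congr (_ * _).
exact/skt_eval_tcoefs/lead_unit_power_le/lead_unit_power_cyc_coefs.
Qed.
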